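(* Let $w,z,f,D,r$ and $S_a$ be as in the context, and let $d\sigma_0$ be the area element of $S_a$ induced by the Euclidean metric. Then there is a constant $C$ independent of $a\ge1$ such that $$\int_{S_a}\frac{f a}{D r^4}\,d\sigma_0\le \frac{C}{a}\qquad\text{and}\qquad \int_{S_a}\frac{f^2a^2w}{D^3r^5}\,d\sigma_0\le\frac{C}{a},$$ where $f=f(a)$ and $w=w(t)$ at the point of parameter $t$.
   Context: Let $l>0$ and $w,z:[0,l]\to\mathbb{R}$ be smooth with the surface of revolution $(w\cos\theta,w\sin\theta,z)$ a smooth closed convex surface diffeomorphic to $\mathbb{S}^2$ with positive Gaussian curvature, $C_1^2\le w^2+z^2\le C_2^2$ ($C_1,C_2>0$), $w'^2+z'^2=1$, $w>0$ on $(0,l)$, $w(0)=w(l)=0$, $z'(0)=z'(l)=0$ ($w$ odd and $z$ even across the endpoints), $z(0)>z(l)$. Let $f(a)\ge1$ for $a\ge1$, $h=f(a)z$, $D=\sqrt{w'^2+f^2z'^2}$, $S_a$ the surface $(aw(t)\cos\theta, aw(t)\sin\theta, ah(t))$, and $r=a\sqrt{w^2+h^2}$ the Euclidean distance to the origin on $S_a$. Note $d\sigma_0=a^2Dw\,dt\,d\theta$. *)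

From Stdlib Require Import Reals.
Open Scope R_scope.

Definition smooth (g : R -> R) : Prop :=
  exists d : nat -> R -> R,
    d O = g /\ forall (n : nat) (x : R), derivable_pt_lim (d n) x (d (S n) x).

Definition Rint (F : R -> R) (a b I : R) : Prop :=
  exists pr : Riemann_integrable F a b, RiemannInt pr = I.

(* Integral over S_a of g(t,theta) against the area element
   d sigma_0 = a^2 D(t) w(t) dt dtheta, (t,theta) in [0,l] x [0,2 pi],
   as an iterated Riemann integral. *)
Definition surf_integral_Sa (l a : R) (w D : R -> R) (g : R -> R -> R) (I : R)
  : Prop :=
  exists inner : R -> R,
    (forall th, 0 <= th <= 2 * PI ->
       Rint (fun t => g t th * (a ^ 2 * D t * w t)) 0 l (inner th)) /\
    Rint inner 0 (2 * PI) I.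

(* Gaussian curvature of the surface of revolution (w cos th, w sin th, z)
   at parameter t, given first (w1,z1) and second (w2,z2) derivatives. *)
Definition gauss_curv_rev (w w1 w2 z1 z2 : R -> R) (t : R) : R :=
  z1 t * (w1 t * z2 t - w2 t * z1 t) / (w t * (w1 t ^ 2 + z1 t ^ 2) ^ 2).

(* Write q = w^2 + (F z)^2 with F = f(a) >= 1.  Since r = a sqrt q and
   d sigma_0 = a^2 D w dt dtheta, each integrand times the area element equals
   1/a times a "reduced integrand" in t alone; it remains to bound the
   t-integral of the reduced integrand uniformly in F >= 1.

   Geometry of the profile: positive curvature gives z' <> 0 on (0,l), hence
   z' < 0 since z(0) > z(l); at the poles w = 0, so |z| >= C1 there, and a
   compactness argument yields c > 0 with z' <= -c on the equatorial zone
   |z| < C1/2.  In that zone w^2 >= 3/4 C1^2; in the polar zones (F z)^2 is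
   large.  Splitting into the two zones, the first reduced integrand F w / q^2
   is dominated by the derivative of  - K atan (F z) + M t  (total variation
   <= K pi + M l), and the second one by a constant. *)

From Stdlib Require Import Reals Lra Psatz.
From Coquelicot Require Import Coquelicot.
Open Scope R_scope.

Lemma Rdiv_le_cross (x y x' y' : R) :
  0 < y -> 0 < y' -> x * y' <= x' * y -> x / y <= x' / y'.
Proof.
  intros Hy Hy' H.
  replace (x / y) with (x * y' * / (y * y')) by (field; lra).
  replace (x' / y') with (x' * y * / (y * y')) by (field; lra).
  apply Rmult_le_compat_r; [apply Rlt_le, Rinv_0_lt_compat; nra | exact H].
Qed.

Lemma sq_le_scaled_sq (F Z : R) : 1 <= F -> Z ^ 2 <= (F * Z) ^ 2.
Proof.
  intros HF. rewrite Rpow_mult_distr.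
  assert (0 <= Z ^ 2) by nra. assert (1 <= F ^ 2) by nra. nra.
Qed.

Lemma scaled_speed_ge1 (F W1 Z1 : R) :
  1 <= F -> W1 ^ 2 + Z1 ^ 2 = 1 -> 1 <= W1 ^ 2 + F ^ 2 * Z1 ^ 2.
Proof. intros HF Hunit. pose proof (sq_le_scaled_sq F Z1 HF). rewrite Rpow_mult_distr in *. lra. Qed.

Lemma abs_lt_sq (Z d : R) : Rabs Z < d -> Z ^ 2 < d ^ 2.
Proof. intros H. rewrite <- (pow2_abs Z). pose proof (Rabs_pos Z). nra. Qed.

Lemma abs_ge_sq (Z d : R) : 0 <= d -> d <= Rabs Z -> d ^ 2 <= Z ^ 2.
Proof. intros Hd H. rewrite <- (pow2_abs Z). nra. Qed.

(* Lower bound for the rescaled norm in the equatorial zone |z| < C1 / 2,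
   where w^2 >= 3/4 C1^2 (see [sq_norm_lower_near]). *)
Definition equator_const (C1 : R) : R := Rmin (3 / 4 * C1 ^ 2) 1.

Lemma equator_const_pos (C1 : R) : 0 < C1 -> 0 < equator_const C1.
Proof. intros HC1. apply Rmin_glb_lt; nra. Qed.

Lemma sq_norm_lower_near (C1 F W Z : R) :
  1 <= F -> C1 ^ 2 <= W ^ 2 + Z ^ 2 -> Rabs Z < C1 / 2 ->
  equator_const C1 * (1 + (F * Z) ^ 2) <= W ^ 2 + (F * Z) ^ 2.
Proof.
  intros HF HWZ HZ. unfold equator_const.
  pose proof (abs_lt_sq _ _ HZ). pose proof (Rmin_l (3 / 4 * C1 ^ 2) 1).
  pose proof (Rmin_r (3 / 4 * C1 ^ 2) 1). assert (0 <= (F * Z) ^ 2) by nra. nra.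
Qed.

Lemma sq_norm_lower_far (C1 F W Z : R) :
  0 < C1 -> C1 / 2 <= Rabs Z -> (F * (C1 / 2)) ^ 2 <= W ^ 2 + (F * Z) ^ 2.
Proof.
  intros HC1 HZ. pose proof (abs_ge_sq Z (C1 / 2) ltac:(lra) HZ).
  rewrite !Rpow_mult_distr. assert (0 <= F ^ 2) by nra. nra.
Qed.

Lemma height_at_pole (C1 W Z : R) :
  0 < C1 -> C1 ^ 2 <= W ^ 2 + Z ^ 2 -> W = 0 -> C1 <= Rabs Z.
Proof.
  intros HC1 Hbnd HW. rewrite HW, <- (pow2_abs Z) in Hbnd.
  pose proof (Rabs_pos Z). nra.
Qed.

(* Equatorial bound for the first reduced integrand F w / q^2: it is dominated by
   a multiple of - F z' / (1 + (F z)^2), the derivative of - atan (F z). *)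
Lemma first_integrand_near (C2 c m F W X Z1 q : R) :
  0 < C2 -> 0 < c -> 0 < m -> 1 <= F -> 0 <= W <= C2 -> 1 <= X -> m * X <= q -> Z1 <= - c ->
  F * W / q ^ 2 <= C2 / (m ^ 2 * c) * (- (F * Z1) / X).
Proof.
  intros HC2 Hc Hm HF HW HX Hq HZ1.
  replace (C2 / (m ^ 2 * c) * (- (F * Z1) / X)) with (C2 * F * - Z1 / (m ^ 2 * c * X))
    by (field; repeat split; nra).
  assert (Hm2 : 0 < m ^ 2) by (apply pow_lt; lra).
  apply Rdiv_le_cross; [apply pow_lt; nra | apply Rmult_lt_0_compat; [apply Rmult_lt_0_compat |]; lra |].
  assert (HmX : m ^ 2 * X <= q ^ 2).
  { apply Rle_trans with ((m * X) ^ 2); [rewrite Rpow_mult_distr; nra | apply pow_incr; nra]. }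
  assert (HWc : W * c <= C2 * - Z1) by nra.
  replace (F * W * (m ^ 2 * c * X)) with (F * (W * c) * (m ^ 2 * X)) by ring.
  replace (C2 * F * - Z1 * q ^ 2) with (F * (C2 * - Z1) * q ^ 2) by ring.
  apply Rmult_le_compat; [apply Rmult_le_pos; nra | nra | apply Rmult_le_compat_l; lra | exact HmX].
Qed.

(* Polar bound for F w / q^2: a constant, since q^2 >= F^4 (C1 / 2)^4. *)
Lemma first_integrand_far (C1 C2 F W q : R) :
  0 < C1 -> 1 <= F -> 0 <= W <= C2 -> (F * (C1 / 2)) ^ 2 <= q ->
  F * W / q ^ 2 <= C2 / (C1 / 2) ^ 4.
Proof.
  intros HC1 HF HW Hq.
  assert (HC : 0 < (C1 / 2) ^ 4) by (apply pow_lt; lra).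
  assert (HF4 : F <= F ^ 4) by (pose proof (pow_R1_Rle F 3 HF); simpl in *; nra).
  assert (Hq4 : F ^ 4 * (C1 / 2) ^ 4 <= q ^ 2).
  { replace (F ^ 4 * (C1 / 2) ^ 4) with (((F * (C1 / 2)) ^ 2) ^ 2) by ring.
    apply pow_incr; split; [nra | exact Hq]. }
  apply Rdiv_le_cross; [nra | exact HC |].
  apply Rle_trans with (C2 * (F ^ 4 * (C1 / 2) ^ 4)); [| nra].
  replace (F * W * (C1 / 2) ^ 4) with (W * (F * (C1 / 2) ^ 4)) by ring.
  apply Rmult_le_compat; nra.
Qed.

(* Pointwise bound for the first reduced integrand, uniform in F >= 1: the sum of
   the equatorial and polar bounds (both are nonnegative). *)
Lemma first_integrand_bound (C1 C2 c F W Z Z1 : R) :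
  0 < C1 -> 0 < C2 -> 0 < c -> 1 <= F -> 0 <= W -> C1 ^ 2 <= W ^ 2 + Z ^ 2 <= C2 ^ 2 ->
  Z1 <= 0 -> (Rabs Z < C1 / 2 -> Z1 <= - c) ->
  F * W / (W ^ 2 + (F * Z) ^ 2) ^ 2
  <= C2 / (equator_const C1 ^ 2 * c) * (- (F * Z1) / (1 + (F * Z) ^ 2))
     + C2 / (C1 / 2) ^ 4.
Proof.
  intros HC1 HC2 Hc HF HW [HWZ HWZ2] HZ1 Hsteep.
  pose proof (equator_const_pos C1 HC1) as Hm.
  assert (HX : 1 <= 1 + (F * Z) ^ 2) by nra.
  assert (HWC2 : 0 <= W <= C2) by nra.
  assert (Hslope : 0 <= C2 / (equator_const C1 ^ 2 * c) * (- (F * Z1) / (1 + (F * Z) ^ 2))).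
  { apply Rmult_le_pos; apply Rmult_le_pos;
      try (apply Rlt_le, Rinv_0_lt_compat; try apply Rmult_lt_0_compat; try apply pow_lt); nra. }
  assert (Hpole : 0 <= C2 / (C1 / 2) ^ 4).
  { apply Rmult_le_pos; [nra | apply Rlt_le, Rinv_0_lt_compat, pow_lt; lra]. }
  destruct (Rlt_or_le (Rabs Z) (C1 / 2)) as [Hnear | Hfar].
  - pose proof (first_integrand_near C2 c (equator_const C1) F W (1 + (F * Z) ^ 2) Z1
      (W ^ 2 + (F * Z) ^ 2) HC2 Hc Hm HF HWC2 HX (sq_norm_lower_near C1 F W Z HF HWZ Hnear)
      (Hsteep Hnear)).
    lra.
  - pose proof (first_integrand_far C1 C2 F W (W ^ 2 + (F * Z) ^ 2) HC1 HF HWC2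
      (sq_norm_lower_far C1 F W Z HC1 Hfar)).
    lra.
Qed.

(* Equatorial bound for the second reduced integrand F^2 w^2 / (D^2 s^5), s = sqrt q:
   the steep slope gives D^2 >= F^2 c^2. *)
Lemma second_integrand_near (C1 c F W D2 s : R) :
  0 < C1 -> 0 < c -> 1 <= F -> F ^ 2 * c ^ 2 <= D2 -> W ^ 2 <= s ^ 2 -> C1 <= s ->
  F ^ 2 * W ^ 2 / (D2 * s ^ 5) <= 1 / (c ^ 2 * C1 ^ 3).
Proof.
  intros HC1 Hc HF HD2 HWs Hs.
  assert (HFc : 0 < F ^ 2 * c ^ 2) by (apply Rmult_lt_0_compat; apply pow_lt; lra).
  assert (Hs3 : C1 ^ 3 <= s ^ 3) by (apply pow_incr; lra).
  assert (HC13 : 0 < C1 ^ 3) by (apply pow_lt; lra).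
  apply Rdiv_le_cross; [apply Rmult_lt_0_compat; [lra | apply pow_lt; lra]
                       | apply Rmult_lt_0_compat; [apply pow_lt |]; lra |].
  replace (F ^ 2 * W ^ 2 * (c ^ 2 * C1 ^ 3)) with (F ^ 2 * c ^ 2 * (W ^ 2 * C1 ^ 3)) by ring.
  replace (1 * (D2 * s ^ 5)) with (D2 * (s ^ 2 * s ^ 3)) by ring.
  apply Rmult_le_compat; [lra | apply Rmult_le_pos; nra | lra |].
  apply Rmult_le_compat; nra.
Qed.

Lemma second_integrand_far (C1 F W D2 s : R) :
  0 < C1 -> 1 <= F -> 1 <= D2 -> W ^ 2 <= s ^ 2 -> F * (C1 / 2) <= s ->
  F ^ 2 * W ^ 2 / (D2 * s ^ 5) <= 1 / (C1 / 2) ^ 3.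
Proof.
  intros HC1 HF HD2 HWs Hs.
  assert (HC : 0 < (C1 / 2) ^ 3) by (apply pow_lt; lra).
  assert (Hs3 : F ^ 3 * (C1 / 2) ^ 3 <= s ^ 3)
    by (rewrite <- Rpow_mult_distr; apply pow_incr; nra).
  assert (HF3 : F ^ 2 <= F ^ 3) by nra.
  assert (Hs0 : 0 < s) by nra.
  apply Rdiv_le_cross; [apply Rmult_lt_0_compat; [lra | apply pow_lt; lra] | exact HC |].
  replace (F ^ 2 * W ^ 2 * (C1 / 2) ^ 3) with (W ^ 2 * (F ^ 2 * (C1 / 2) ^ 3)) by ring.
  replace (1 * (D2 * s ^ 5)) with (D2 * (s ^ 2 * s ^ 3)) by ring.
  apply Rle_trans with (s ^ 2 * s ^ 3).
  - apply Rmult_le_compat; [nra | apply Rmult_le_pos; nra | exact HWs | nra].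
  - assert (0 <= s ^ 2 * s ^ 3) by (apply Rmult_le_pos; apply pow_le; lra). nra.
Qed.

Lemma second_integrand_bound (C1 c F W Z W1 Z1 : R) :
  0 < C1 -> 0 < c -> 1 <= F -> C1 ^ 2 <= W ^ 2 + Z ^ 2 -> W1 ^ 2 + Z1 ^ 2 = 1 ->
  (Rabs Z < C1 / 2 -> Z1 <= - c) ->
  F ^ 2 * W ^ 2 / ((W1 ^ 2 + F ^ 2 * Z1 ^ 2) * sqrt (W ^ 2 + (F * Z) ^ 2) ^ 5)
  <= 1 / (C1 / 2) ^ 3 + 1 / (c ^ 2 * C1 ^ 3).
Proof.
  intros HC1 Hc HF HWZ Hunit Hsteep.
  set (q := W ^ 2 + (F * Z) ^ 2).
  assert (Hq : C1 ^ 2 <= q) by (pose proof (sq_le_scaled_sq F Z HF); unfold q; lra).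
  assert (HWs : W ^ 2 <= sqrt q ^ 2) by (rewrite pow2_sqrt by nra; unfold q; nra).
  assert (Hnear : 0 < 1 / (c ^ 2 * C1 ^ 3))
    by (apply Rdiv_lt_0_compat; [lra | apply Rmult_lt_0_compat; apply pow_lt; lra]).
  assert (Hfar : 0 < 1 / (C1 / 2) ^ 3) by (apply Rdiv_lt_0_compat; [lra | apply pow_lt; lra]).
  destruct (Rlt_or_le (Rabs Z) (C1 / 2)) as [Hz | Hz].
  - assert (HZ1 : c ^ 2 <= Z1 ^ 2) by (pose proof (Hsteep Hz); nra).
    assert (Hs : C1 <= sqrt q) by (rewrite <- (sqrt_pow2 C1) by lra; apply sqrt_le_1_alt, Hq).
    assert (HD2 : F ^ 2 * c ^ 2 <= W1 ^ 2 + F ^ 2 * Z1 ^ 2) by nra.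
    pose proof (second_integrand_near C1 c F W (W1 ^ 2 + F ^ 2 * Z1 ^ 2) (sqrt q)
      HC1 Hc HF HD2 HWs Hs).
    lra.
  - assert (Hs : F * (C1 / 2) <= sqrt q).
    { rewrite <- (sqrt_pow2 (F * (C1 / 2))) by nra. apply sqrt_le_1_alt, sq_norm_lower_far; lra. }
    pose proof (second_integrand_far C1 F W (W1 ^ 2 + F ^ 2 * Z1 ^ 2) (sqrt q)
      HC1 HF (scaled_speed_ge1 F W1 Z1 HF Hunit) HWs Hs).
    lra.
Qed.

(* Continuity of real operations, stated for [Rmult], [Rplus], ... so that they
   apply syntactically; [solve_continuous] decomposes a continuity goal with them. *)
Lemma continuous_Rmult (f g : R -> R) (x : R) :
  continuous f x -> continuous g x -> continuous (fun t => f t * g t) x.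
Proof. exact (continuous_mult f g x). Qed.
Lemma continuous_Rplus (f g : R -> R) (x : R) :
  continuous f x -> continuous g x -> continuous (fun t => f t + g t) x.
Proof. exact (continuous_plus f g x). Qed.
Lemma continuous_Ropp (f : R -> R) (x : R) :
  continuous f x -> continuous (fun t => - f t) x.
Proof. exact (continuous_opp f x). Qed.
Lemma continuous_Rpow (f : R -> R) (n : nat) (x : R) :
  continuous f x -> continuous (fun t => f t ^ n) x.
Proof.
  intros Hf. induction n as [| n IH]; simpl.
  - apply continuous_const.
  - exact (continuous_Rmult f _ x Hf IH).
Qed.

Ltac solve_continuous :=
  unfold Rdiv, Rminus;
  repeat match goal with
  | |- continuous (fun _ => ?c) ?x => apply (continuous_const c x)
  | |- continuous (fun y => y) ?x => apply (continuous_id x)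
  | |- continuous (fun y => @?f y ^ ?n) ?x => apply (continuous_Rpow f n x)
  | |- continuous (fun y => sqrt (@?f y)) ?x => apply (continuous_sqrt_comp f x)
  | |- continuous (fun y => Rabs (@?f y)) ?x => apply (continuous_Rabs_comp f x)
  | |- continuous (fun y => @?f y + @?g y) ?x => apply (continuous_Rplus f g x)
  | |- continuous (fun y => - @?f y) ?x => apply (continuous_Ropp f x)
  | |- continuous (fun y => @?f y * @?g y) ?x => apply (continuous_Rmult f g x)
  | |- continuous (fun y => / @?f y) ?x => apply (continuous_Rinv_comp f x)
  end.

Lemma continuous_of_derivable (f f' : R -> R) (x : R) :
  derivable_pt_lim f x (f' x) -> continuous f x.
Proof.
  intros H. apply (ex_derive_continuous (V := R_NormedModule)).
  exists (f' x). apply is_derive_Reals, H.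
Qed.

Lemma surf_integral_Sa_rotational (l a : R) (w D : R -> R) (g : R -> R -> R) (G : R -> R) :
  0 <= l -> (forall t th, 0 < t < l -> g t th * (a ^ 2 * D t * w t) = G t) ->
  ex_RInt G 0 l -> surf_integral_Sa l a w D g (2 * PI * RInt G 0 l).
Proof.
  intros Hl HG HexG.
  assert (Hrange : forall t, Rmin 0 l < t < Rmax 0 l -> 0 < t < l)
    by (rewrite Rmin_left, Rmax_right by lra; tauto).
  exists (fun _ => RInt G 0 l). split.
  - intros th _.
    assert (Hex : ex_RInt (fun t => g t th * (a ^ 2 * D t * w t)) 0 l)
      by (apply ex_RInt_ext with G; [intros t Ht; symmetry; apply HG, Hrange, Ht | exact HexG]).
    exists (ex_RInt_Reals_0 _ _ _ Hex). rewrite <- RInt_Reals.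
    apply RInt_ext. intros t Ht. apply HG, Hrange, Ht.
  - exists (ex_RInt_Reals_0 _ _ _ (ex_RInt_const 0 (2 * PI) (RInt G 0 l))).
    rewrite <- RInt_Reals, RInt_const. cbn. unfold mult; cbn. ring.
Qed.

Lemma RInt_le_antiderivative (G H dH : R -> R) (a b : R) :
  a <= b -> ex_RInt G a b ->
  (forall t, a <= t <= b -> is_derive H t (dH t)) ->
  (forall t, a <= t <= b -> continuous dH t) ->
  (forall t, a < t < b -> G t <= dH t) ->
  RInt G a b <= H b - H a.
Proof.
  intros Hab HexG HH HdH Hle.
  assert (Hrange : forall t, Rmin a b <= t <= Rmax a b -> a <= t <= b)
    by (rewrite Rmin_left, Rmax_right by lra; tauto).
  assert (Hint : is_RInt dH a b (H b - H a)).
  { apply (is_RInt_derive H dH); intros t Ht; [apply HH | apply HdH]; apply Hrange, Ht. }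
  rewrite <- (is_RInt_unique _ _ _ _ Hint).
  apply RInt_le; [exact Hab | exact HexG | eexists; exact Hint | exact Hle].
Qed.

Lemma surf_integral_bound (l a B : R) (w D : R -> R) (g : R -> R -> R) (G H dH : R -> R) :
  0 < l ->
  (forall t th, 0 < t < l -> g t th * (a ^ 2 * D t * w t) = G t) ->
  (forall t, 0 <= t <= l -> continuous G t) ->
  (forall t, 0 <= t <= l -> is_derive H t (dH t)) ->
  (forall t, 0 <= t <= l -> continuous dH t) ->
  (forall t, 0 < t < l -> G t <= dH t) ->
  H l - H 0 <= B ->
  exists I, surf_integral_Sa l a w D g I /\ I <= 2 * PI * B.
Proof.
  intros Hl HG HGc HH HdH Hle HB.
  assert (HexG : ex_RInt G 0 l)
    by (apply (ex_RInt_continuous (V := R_CompleteNormedModule)); rewrite Rmin_left, Rmax_right by lra; exact HGc).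
  exists (2 * PI * RInt G 0 l). split.
  - apply surf_integral_Sa_rotational; [lra | exact HG | exact HexG].
  - pose proof (RInt_le_antiderivative G H dH 0 l ltac:(lra) HexG HH HdH Hle).
    pose proof PI_RGT_0. nra.
Qed.

Lemma slope_nonzero_of_curvature (w w1 w2 z1 z2 : R -> R) (k t : R) :
  0 < k -> k <= gauss_curv_rev w w1 w2 z1 z2 t -> z1 t <> 0.
Proof.
  intros Hk Hcurv Hz. unfold gauss_curv_rev in Hcurv.
  rewrite Hz, !Rmult_0_l in Hcurv. unfold Rdiv in Hcurv. rewrite Rmult_0_l in Hcurv. lra.
Qed.

(* A continuous derivative without zeros on (a,b) has the sign of the mean slope
   (mean value theorem, then intermediate value theorem). *)
Lemma slope_negative (z z1 : R -> R) (a b : R) :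
  a < b -> (forall t, derivable_pt_lim z t (z1 t)) -> (forall t, continuous z1 t) ->
  (forall t, a < t < b -> z1 t <> 0) -> z b < z a ->
  forall t, a < t < b -> z1 t < 0.
Proof.
  intros Hab Hz Hz1c Hnz Hdrop t Ht.
  destruct (MVT_cor2 z z1 a b Hab (fun t _ => Hz t)) as [t0 [Hmvt Ht0]].
  assert (Hneg : z1 t0 < 0) by nra.
  destruct (Rlt_or_le (z1 t) 0) as [Hlt | Hge]; [exact Hlt | exfalso].
  destruct (IVT_gen_consistent z1 t0 t 0 Hz1c) as [x [Hx Hzero]].
  { split; [apply Rle_trans with (z1 t0); [apply Rmin_l | lra] |
            apply Rle_trans with (z1 t); [lra | apply Rmax_r]]. }
  apply (Hnz x); [| exact Hzero].
  pose proof (Rmin_glb_lt t0 t a). pose proof (Rmax_lub_lt t0 t b). lra.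
Qed.

(* Compactness: if u <= 0 on [a,b] and u < 0 where v < d, then u is uniformly
   negative where v < d / 2.  The maximum of u - max (v - d / 2, 0) is used. *)
Lemma uniformly_negative (u v : R -> R) (a b d : R) :
  a <= b -> 0 < d ->
  (forall t, a <= t <= b -> continuous u t) -> (forall t, a <= t <= b -> continuous v t) ->
  (forall t, a <= t <= b -> u t <= 0) ->
  (forall t, a <= t <= b -> v t < d -> u t < 0) ->
  exists c, 0 < c /\ forall t, a <= t <= b -> v t < d / 2 -> u t <= - c.
Proof.
  intros Hab Hd Huc Hvc Hnp Hneg.
  (* psi = u - max (v - d / 2, 0), written with |.| to be visibly continuous *)
  set (psi := fun t => u t - (v t - d / 2 + Rabs (v t - d / 2)) / 2).
  assert (Hpsi : forall t, a <= t <= b -> psi t < 0).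
  { intros t Ht. unfold psi.
    pose proof (Rle_abs (v t - d / 2)). pose proof (Rle_abs (- (v t - d / 2))).
    rewrite Rabs_Ropp in *. pose proof (Hnp t Ht).
    destruct (Rlt_or_le (v t) d) as [Hv | Hv]; [pose proof (Hneg t Ht Hv) |]; lra. }
  destruct (continuity_ab_maj psi a b Hab) as [t0 [Hmax Ht0]].
  { intros t Ht. apply continuity_pt_filterlim. change (continuous psi t). unfold psi.
    solve_continuous.
    - apply Huc, Ht.
    - apply Hvc, Ht.
    - apply Hvc, Ht. }
  exists (- psi t0). split; [pose proof (Hpsi t0 Ht0); lra |].
  intros t Ht Hv. pose proof (Hmax t Ht). unfold psi in *.
  rewrite (Rabs_left (v t - d / 2)) in * by lra. lra.
Qed.

(* Shape of the slope of the profile: positive curvature and z(0) > z(l) give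
   z' < 0 inside; at the poles z' = 0 and |z| >= C1, so z' is uniformly
   negative on the equatorial zone |z| < C1 / 2. *)
Lemma profile_slope (l C1 : R) (w w1 w2 z z1 z2 : R -> R) :
  0 < l -> 0 < C1 ->
  (forall t, derivable_pt_lim z t (z1 t)) -> (forall t, continuous z t) ->
  (forall t, continuous z1 t) ->
  (forall t, 0 <= t <= l -> C1 ^ 2 <= w t ^ 2 + z t ^ 2) ->
  w 0 = 0 -> w l = 0 -> z1 0 = 0 -> z1 l = 0 -> z l < z 0 ->
  (exists k, 0 < k /\ forall t, 0 < t < l -> k <= gauss_curv_rev w w1 w2 z1 z2 t) ->
  (forall t, 0 <= t <= l -> z1 t <= 0) /\
  exists c, 0 < c /\ forall t, 0 <= t <= l -> Rabs (z t) < C1 / 2 -> z1 t <= - c.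
Proof.
  intros Hl HC1 Hz1 z_cont z1_cont Hbnd Hw0 Hwl Hz10 Hz1l Hz0l [k [Hk Hcurv]].
  assert (z1_neg : forall t, 0 < t < l -> z1 t < 0).
  { apply (slope_negative z z1 0 l Hl Hz1 z1_cont); [| lra].
    intros t Ht. exact (slope_nonzero_of_curvature w w1 w2 z1 z2 k t Hk (Hcurv t Ht)). }
  assert (z1_nonpos : forall t, 0 <= t <= l -> z1 t <= 0).
  { intros t Ht. destruct (Req_dec t 0) as [-> | H0]; [lra |].
    destruct (Req_dec t l) as [-> | H1]; [lra |]. apply Rlt_le, z1_neg; lra. }
  assert (z1_neg_low : forall t, 0 <= t <= l -> Rabs (z t) < C1 -> z1 t < 0).
  { intros t Ht Hz. apply z1_neg.
    destruct (Req_dec t 0) as [-> | H0];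
      [pose proof (height_at_pole C1 (w 0) (z 0) HC1 (Hbnd 0 Ht) Hw0); lra |].
    destruct (Req_dec t l) as [-> | H1];
      [pose proof (height_at_pole C1 (w l) (z l) HC1 (Hbnd l Ht) Hwl); lra | lra]. }
  split; [exact z1_nonpos |].
  apply (uniformly_negative z1 (fun t => Rabs (z t)) 0 l C1);
    [lra | lra | intros; apply z1_cont | intros; apply continuous_Rabs_comp, z_cont
    | exact z1_nonpos | exact z1_neg_low].
Qed.

(* The first integrand times the area element is (1 / a) F w / q^2: the scale a
   is factored out, which is the source of the decay C / a. *)
Lemma first_integrand_scaling (a F D W q : R) :
  0 < a -> 0 < D -> 0 < q ->
  F * a / (D * (a * sqrt q) ^ 4) * (a ^ 2 * D * W) = / a * (F * W / q ^ 2).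
Proof.
  intros Ha HD Hq.
  replace ((a * sqrt q) ^ 4) with (a ^ 4 * sqrt q ^ 2 * sqrt q ^ 2) by ring.
  rewrite pow2_sqrt by lra. field. lra.
Qed.

Lemma second_integrand_scaling (a F D2 W q : R) :
  0 < a -> 0 < D2 -> 0 < q ->
  F ^ 2 * a ^ 2 * W / (sqrt D2 ^ 3 * (a * sqrt q) ^ 5) * (a ^ 2 * sqrt D2 * W)
  = / a * (F ^ 2 * W ^ 2 / (D2 * sqrt q ^ 5)).
Proof.
  intros Ha HD2 Hq.
  assert (HsD : 0 < sqrt D2) by (apply sqrt_lt_R0, HD2).
  assert (Hsq : 0 < sqrt q) by (apply sqrt_lt_R0, Hq).
  replace (sqrt D2 ^ 3) with (sqrt D2 ^ 2 * sqrt D2) by ring.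
  rewrite pow2_sqrt by lra. field. repeat split; lra.
Qed.

Section IntegralEstimates.

Variables (l C1 C2 c : R) (w w1 z z1 : R -> R).

Hypothesis l_pos : 0 < l.
Hypothesis C1_pos : 0 < C1.
Hypothesis C2_pos : 0 < C2.
Hypothesis c_pos : 0 < c.
Hypothesis w_cont : forall t, continuous w t.
Hypothesis w1_cont : forall t, continuous w1 t.
Hypothesis z_cont : forall t, continuous z t.
Hypothesis z1_cont : forall t, continuous z1 t.
Hypothesis z_deriv : forall t, is_derive z t (z1 t).
Hypothesis profile_bounds : forall t, 0 <= t <= l -> C1 ^ 2 <= w t ^ 2 + z t ^ 2 <= C2 ^ 2.
Hypothesis unit_speed : forall t, 0 <= t <= l -> w1 t ^ 2 + z1 t ^ 2 = 1.
Hypothesis w_nonneg : forall t, 0 <= t <= l -> 0 <= w t.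
Hypothesis z1_nonpos : forall t, 0 <= t <= l -> z1 t <= 0.
Hypothesis steep_near_equator : forall t, 0 <= t <= l -> Rabs (z t) < C1 / 2 -> z1 t <= - c.

Lemma scaled_norm_pos (F t : R) : 1 <= F -> 0 <= t <= l -> 0 < w t ^ 2 + (F * z t) ^ 2.
Proof.
  intros HF Ht. pose proof (profile_bounds t Ht). pose proof (sq_le_scaled_sq F (z t) HF).
  assert (0 < C1 ^ 2) by (apply pow_lt; lra). lra.
Qed.

Lemma first_integral_bound :
  exists B, forall a F, 1 <= a -> 1 <= F ->
  exists I, surf_integral_Sa l a w (fun t => sqrt (w1 t ^ 2 + F ^ 2 * z1 t ^ 2))
    (fun t _ => F * a / (sqrt (w1 t ^ 2 + F ^ 2 * z1 t ^ 2)
                         * (a * sqrt (w t ^ 2 + (F * z t) ^ 2)) ^ 4)) I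
    /\ I <= B / a.
Proof.
  set (K := C2 / (equator_const C1 ^ 2 * c)). set (M := C2 / (C1 / 2) ^ 4).
  assert (HK : 0 <= K).
  { apply Rlt_le, Rdiv_lt_0_compat; [lra |].
    apply Rmult_lt_0_compat; [apply pow_lt, equator_const_pos |]; lra. }
  exists (2 * PI * (K * PI + M * l)). intros a F Ha HF.
  (* the integrand is dominated by the derivative of - K atan (F z) + M t *)
  destruct (surf_integral_bound l a ((K * PI + M * l) / a) w
      (fun t => sqrt (w1 t ^ 2 + F ^ 2 * z1 t ^ 2))
      (fun t _ => F * a / (sqrt (w1 t ^ 2 + F ^ 2 * z1 t ^ 2)
                          * (a * sqrt (w t ^ 2 + (F * z t) ^ 2)) ^ 4))
      (fun t => / a * (F * w t / (w t ^ 2 + (F * z t) ^ 2) ^ 2))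
      (fun t => / a * (K * - atan (F * z t) + M * t))
      (fun t => / a * (K * (- (F * z1 t) / (1 + (F * z t) ^ 2)) + M)))
    as [I [HI HIB]].
  - exact l_pos.
  - intros t th Ht. apply first_integrand_scaling; [lra | | apply scaled_norm_pos; lra].
    apply sqrt_lt_R0. pose proof (scaled_speed_ge1 F (w1 t) (z1 t) HF (unit_speed t ltac:(lra))); lra.
  - intros t Ht. solve_continuous; auto.
    apply pow_nonzero, Rgt_not_eq, scaled_norm_pos; auto.
  - intros t Ht. auto_derive; [exists (z1 t); apply z_deriv |].
    replace (Derive (fun x => z x) t) with (z1 t) by (symmetry; apply is_derive_unique, z_deriv).
    field.
    pose proof (pow2_ge_0 (F * z t)). lra.
  - intros t Ht. solve_continuous; auto.
    pose proof (pow2_ge_0 (F * z t)). lra.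
  - intros t Ht. apply Rmult_le_compat_l; [apply Rlt_le, Rinv_0_lt_compat; lra |].
    assert (Ht' : 0 <= t <= l) by lra.
    apply first_integrand_bound; auto.
  - pose proof (atan_bound (F * z 0)). pose proof (atan_bound (F * z l)).
    assert (K * (atan (F * z 0) - atan (F * z l)) <= K * PI) by (apply Rmult_le_compat_l; lra).
    replace (/ a * (K * - atan (F * z l) + M * l) - / a * (K * - atan (F * z 0) + M * 0))
      with ((K * (atan (F * z 0) - atan (F * z l)) + M * l) / a) by (field; lra).
    apply Rmult_le_compat_r; [apply Rlt_le, Rinv_0_lt_compat |]; lra.
  - exists I. split; [exact HI |]. unfold Rdiv in *. lra.
Qed.

Lemma second_integral_bound :
  exists B, forall a F, 1 <= a -> 1 <= F ->
  exists I, surf_integral_Sa l a w (fun t => sqrt (w1 t ^ 2 + F ^ 2 * z1 t ^ 2))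
    (fun t _ => F ^ 2 * a ^ 2 * w t / (sqrt (w1 t ^ 2 + F ^ 2 * z1 t ^ 2) ^ 3
                                       * (a * sqrt (w t ^ 2 + (F * z t) ^ 2)) ^ 5)) I
    /\ I <= B / a.
Proof.
  set (M := 1 / (C1 / 2) ^ 3 + 1 / (c ^ 2 * C1 ^ 3)).
  exists (2 * PI * (M * l)). intros a F Ha HF.
  (* the integrand is bounded by the constant M / a *)
  destruct (surf_integral_bound l a (M * l / a) w
      (fun t => sqrt (w1 t ^ 2 + F ^ 2 * z1 t ^ 2))
      (fun t _ => F ^ 2 * a ^ 2 * w t / (sqrt (w1 t ^ 2 + F ^ 2 * z1 t ^ 2) ^ 3
                                         * (a * sqrt (w t ^ 2 + (F * z t) ^ 2)) ^ 5))
      (fun t => / a * (F ^ 2 * w t ^ 2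
                       / ((w1 t ^ 2 + F ^ 2 * z1 t ^ 2) * sqrt (w t ^ 2 + (F * z t) ^ 2) ^ 5)))
      (fun t => / a * (M * t)) (fun _ => / a * M))
    as [I [HI HIB]].
  - exact l_pos.
  - intros t th Ht. apply second_integrand_scaling; [lra | | apply scaled_norm_pos; lra].
    pose proof (scaled_speed_ge1 F (w1 t) (z1 t) HF (unit_speed t ltac:(lra))); lra.
  - intros t Ht. solve_continuous; auto.
    pose proof (scaled_speed_ge1 F (w1 t) (z1 t) HF (unit_speed t Ht)).
    pose proof (sqrt_lt_R0 _ (scaled_norm_pos F t HF Ht)).
    apply Rmult_integral_contrapositive. split; [lra | apply pow_nonzero; lra].
  - intros t Ht. auto_derive; [constructor | ring].
  - intros t Ht. apply continuous_const.
  - intros t Ht. apply Rmult_le_compat_l; [apply Rlt_le, Rinv_0_lt_compat; lra |].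
    assert (Ht' : 0 <= t <= l) by lra.
    apply second_integrand_bound; auto. apply profile_bounds, Ht'.
  - apply Req_le. field. lra.
  - exists I. split; [exact HI |]. unfold Rdiv in *. lra.
Qed.

End IntegralEstimates.

Theorem mainTheorem7
  (l C1 C2 : R) (w w1 w2 z z1 z2 : R -> R) (f : R -> R)
  (* smoothness of the (odd/even extended) profile, with its derivatives *)
  (Hws : smooth w) (Hzs : smooth z)
  (Hw1 : forall t, derivable_pt_lim w t (w1 t))
  (Hw2 : forall t, derivable_pt_lim w1 t (w2 t))
  (Hz1 : forall t, derivable_pt_lim z t (z1 t))
  (Hz2 : forall t, derivable_pt_lim z1 t (z2 t))
  (* w odd and z even across the endpoints 0 and l *)
  (Hwodd0 : forall t, w (- t) = - w t) (Hzeven0 : forall t, z (- t) = z t)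
  (Hwoddl : forall t, w (l + t) = - w (l - t))
  (Hzevenl : forall t, z (l + t) = z (l - t))
  (Hl : 0 < l) (HC1 : 0 < C1) (HC2 : 0 < C2)
  (Hbnd : forall t, 0 <= t <= l ->
     C1 ^ 2 <= w t ^ 2 + z t ^ 2 <= C2 ^ 2)
  (Hunit : forall t, 0 <= t <= l -> w1 t ^ 2 + z1 t ^ 2 = 1)
  (Hwpos : forall t, 0 < t < l -> 0 < w t)
  (Hw0 : w 0 = 0) (Hwl : w l = 0)
  (Hz10 : z1 0 = 0) (Hz1l : z1 l = 0)
  (Hz0l : z 0 > z l)
  (* embedded: the profile curve is injective on [0,l] *)
  (Hemb : forall s t, 0 <= s <= l -> 0 <= t <= l ->
     w s = w t -> z s = z t -> s = t)
  (* convex: the surface lies on one side of each tangent plane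
     (by rotational symmetry, tangent planes at theta = 0 suffice) *)
  (Hconv : forall t s phi, 0 <= t <= l -> 0 <= s <= l ->
     - z1 t * (w s * cos phi - w t) + w1 t * (z s - z t) <= 0)
  (* positive Gaussian curvature everywhere (incl. the poles, by continuity
     and compactness this is a uniform positive lower bound on (0,l)) *)
  (Hcurv : exists k, 0 < k /\
     forall t, 0 < t < l -> k <= gauss_curv_rev w w1 w2 z1 z2 t)
  (Hf : forall a, 1 <= a -> 1 <= f a) :
  exists C : R, forall a : R, 1 <= a ->
    let D := fun t => sqrt (w1 t ^ 2 + (f a) ^ 2 * z1 t ^ 2) in
    let h := fun t => f a * z t in
    let r := fun t => a * sqrt (w t ^ 2 + h t ^ 2) in
    (exists I1, surf_integral_Sa l a w D
                  (fun t _ => f a * a / (D t * r t ^ 4)) I1 /\ I1 <= C / a) /\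
    (exists I2, surf_integral_Sa l a w D
                  (fun t _ => (f a) ^ 2 * a ^ 2 * w t / (D t ^ 3 * r t ^ 5)) I2
                /\ I2 <= C / a).
Proof.
  assert (w_cont : forall t, continuous w t) by (intro t; apply (continuous_of_derivable w w1), Hw1).
  assert (w1_cont : forall t, continuous w1 t) by (intro t; apply (continuous_of_derivable w1 w2), Hw2).
  assert (z_cont : forall t, continuous z t) by (intro t; apply (continuous_of_derivable z z1), Hz1).
  assert (z1_cont : forall t, continuous z1 t) by (intro t; apply (continuous_of_derivable z1 z2), Hz2).
  assert (z_deriv : forall t, is_derive z t (z1 t)) by (intro t; apply is_derive_Reals, Hz1).
  assert (w_nonneg : forall t, 0 <= t <= l -> 0 <= w t).
  { intros t Ht. destruct (Req_dec t 0) as [-> | H0]; [lra |].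
    destruct (Req_dec t l) as [-> | H1]; [lra |]. apply Rlt_le, Hwpos; lra. }
  destruct (profile_slope l C1 w w1 w2 z z1 z2 Hl HC1 Hz1 z_cont z1_cont
              (fun t Ht => proj1 (Hbnd t Ht)) Hw0 Hwl Hz10 Hz1l Hz0l Hcurv)
    as [z1_nonpos [c [Hc Hsteep]]].
  edestruct (first_integral_bound l C1 C2 c w w1 z z1) as [B1 HB1]; try assumption.
  edestruct (second_integral_bound l C1 C2 c w w1 z z1) as [B2 HB2]; try assumption.
  exists (Rmax B1 B2). intros a Ha D h r.
  assert (Hdiv : forall B, B <= Rmax B1 B2 -> B / a <= Rmax B1 B2 / a).
  { intros B HB. apply Rmult_le_compat_r; [apply Rlt_le, Rinv_0_lt_compat; lra | exact HB]. }
  split.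
  - destruct (HB1 a (f a) Ha (Hf a Ha)) as [I [HI HIB]].
    exists I. split; [exact HI | apply Rle_trans with (B1 / a); [exact HIB | apply Hdiv, Rmax_l]].
  - destruct (HB2 a (f a) Ha (Hf a Ha)) as [I [HI HIB]].
    exists I. split; [exact HI | apply Rle_trans with (B2 / a); [exact HIB | apply Hdiv, Rmax_r]].
Qed.
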